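(* Let $A$ be a Noetherian commutative ring with identity, let $A[\mathbf{x}]=A[x_1,\ldots,x_n]$ be equipped with a monomial order, let $I\subset A[\mathbf{x}]$ be an ideal, let $M=A[\mathbf{x}]/I$, and let $p\subset A$ be a prime ideal. The following two statements are equivalent: (a) the natural map $f:A_p\to M_p$ is a finite map (i.e. $M_p$ is a finitely generated $A_p$-module); (b) $\mathrm{in}(I)_{x_i^\infty}\,A_p=(1)$ for each $i=1,\ldots,n$.
   Context: A monomial order $>$ is a total order on monomials such that $\mathbf{x}^E>\mathbf{x}^F$ implies $\mathbf{x}^G\mathbf{x}^E>\mathbf{x}^G\mathbf{x}^F$, and $x_i>1$ for each $i$. $\mathrm{in}(f)$ is the greatest term $c\,\mathbf{x}^E$ ($c\neq0$) of a nonzero polynomial $f$; $\mathrm{in}(I)$ is the ideal generated by all $\mathrm{in}(f)$, $f\in I$. For an ideal $J\subset A[\mathbf{x}]$ and monomial $\mathbf{x}^E$, the coefficient ideal is $J_{\mathbf{x}^E}=(c\in A\mid c\,\mathbf{x}^E\in J)\subset A$. $\mathrm{in}(I)_{x_i^\infty}$ denotes the stationary limit (union) of the ascending chain of ideals $\mathrm{in}(I)_{x_i}\subset\mathrm{in}(I)_{x_i^2}\subset\cdots$ of $A$. *)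

From HB Require Import structures.
From mathcomp Require Import all_boot all_order all_algebra.
From mathcomp Require Import mpoly.
Set Implicit Arguments. Unset Strict Implicit. Unset Printing Implicit Defensive.
Import Order.TTheory GRing.Theory.
Local Open Scope ring_scope.

Definition is_ideal (R : comNzRingType) (J : R -> Prop) : Prop :=
  [/\ J 0, (forall x y, J x -> J y -> J (x + y)) & (forall r x, J x -> J (r * x))].

Definition ideal_gen (R : comNzRingType) (S : R -> Prop) (x : R) : Prop :=
  exists k (r g : 'I_k -> R), (forall i, S (g i)) /\ x = \sum_(i < k) r i * g i.

Definition is_prime_ideal (R : comNzRingType) (p : R -> Prop) : Prop :=
  [/\ is_ideal p, ~ p 1 & (forall a b, p (a * b) -> p a \/ p b)].

Definition noetherian (R : comNzRingType) : Prop :=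
  forall J : R -> Prop, is_ideal J ->
    exists s : seq R, forall x, J x <-> ideal_gen (fun y => y \in s) x.

(* monomials x^E are represented by multinomials E : 'X_{1..n};
   x^E x^F = x^(E+F), 1 = x^0, x_i = x^(U_i) *)
Definition monomial_order (n : nat) (le : rel 'X_{1..n}) : Prop :=
  [/\ reflexive le, transitive le, antisymmetric le & total le] /\
  (forall E F G : 'X_{1..n}, le E F -> le (G + E)%MM (G + F)%MM) /\
  (forall i : 'I_n, le 0%MM (mnm1 i) /\ 0%MM != mnm1 i).

Section Initial.
Variables (A : comNzRingType) (n : nat) (le : rel 'X_{1..n}).

Definition is_lead_mon (f : {mpoly A[n]}) (E : 'X_{1..n}) : Prop :=
  E \in msupp f /\ (forall F, F \in msupp f -> le F E).

Definition is_initial_term (f g : {mpoly A[n]}) : Prop :=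
  f != 0 /\ exists E, is_lead_mon f E /\ g = f@_E *: 'X_[E].

Definition initial_ideal (I : {mpoly A[n]} -> Prop) : {mpoly A[n]} -> Prop :=
  ideal_gen (fun g => exists f, I f /\ is_initial_term f g).

Definition coef_ideal (J : {mpoly A[n]} -> Prop) (E : 'X_{1..n}) : A -> Prop :=
  fun c => J (c *: 'X_[E]).

Definition initial_coef_ideal_inf (I : {mpoly A[n]} -> Prop) (i : 'I_n) : A -> Prop :=
  fun c => exists k : nat, coef_ideal (initial_ideal I) (mnm1 i *+ k.+1)%MM c.
End Initial.

(* For an A-module V and a submodule N, the localization (V/N)_p consists of
   fractions v/s (v : V, s : A, s ∉ p), with v/s = w/t iff u (t v - s w) ∈ N for
   some u ∉ p.  A_p is the case V = A (regular module), N = 0. *)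
Section Loc.
Variables (A : comNzRingType) (V : lmodType A).

Definition fr_add (x y : V * A) : V * A := (y.2 *: x.1 + x.2 *: y.1, x.2 * y.2).
Definition fr_zero : V * A := (0, 1).
(* action of a/t ∈ A_p on v/s *)
Definition fr_scale (c : A * A) (x : V * A) : V * A := (c.1 *: x.1, c.2 * x.2).
Definition fr_eq (p : A -> Prop) (N : V -> Prop) (x y : V * A) : Prop :=
  exists u, ~ p u /\ N ((u * y.2) *: x.1 - (u * x.2) *: y.1).

Definition loc_fin_gen (p : A -> Prop) (N : V -> Prop) : Prop :=
  exists k (g : 'I_k -> V * A), (forall i, ~ p (g i).2) /\
    forall x : V * A, ~ p x.2 ->
      exists c : 'I_k -> A * A, (forall i, ~ p (c i).2) /\
        fr_eq p N x (\big[fr_add/fr_zero]_(i < k) fr_scale (c i) (g i)).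
End Loc.

(* J A_p = (1): the ideal of A_p generated by the images j/1 (j ∈ J) contains 1/1 *)
Definition ext_loc_unit (A : comNzRingType) (p : A -> Prop) (J : A -> Prop) : Prop :=
  exists k (c : 'I_k -> A * A) (j : 'I_k -> A),
    (forall i, ~ p (c i).2) /\ (forall i, J (j i)) /\
    fr_eq (V := A^o) p (fun v => v = 0) (1, 1)
      (\big[@fr_add A A^o/fr_zero A^o]_(i < k) fr_scale (c i) ((j i : A^o), 1)).

(* (b) => (a): for each i there is g_i in I whose coefficient c_i at x_i^(k_i) lies outside p
   and whose other monomials are smaller than x_i^(k_i).  Modulo I, a monomial x^F divisible by
   x_i^(k_i) satisfies c_i x^F = x^(F - k_i e_i) (c_i x_i^(k_i) - g_i), which only involves
   monomials smaller than x^F, and c_i is a unit of A_p.  Monomial orders are well-founded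
   (Dickson's lemma), so M_p is spanned by the monomials of degree at most sum_i k_i.
   (a) => (b) is the determinant trick: if v_1, ..., v_k generate M_p, then after clearing
   denominators e x_i v_j = sum_l B_jl v_l in M_p, so e0 chi_B(e x_i) lies in I for some e0
   outside p.  The initial term of x_i e0 chi_B(e x_i) is e0 e^k x_i^(k+1), and e0 e^k is a
   unit of A_p lying in in(I)_(x_i^(k+1)). *)

From HB Require Import structures.
From mathcomp Require Import all_boot all_order all_algebra.
From mathcomp Require Import mpoly.
From Stdlib Require Import Classical ClassicalEpsilon.
Set Implicit Arguments. Unset Strict Implicit. Unset Printing Implicit Defensive.
Import Order.TTheory GRing.Theory.
Local Open Scope ring_scope.

Lemma nat_argmin (g : nat -> nat) (Q : nat -> Prop) :
  (exists j, Q j) -> exists j, Q j /\ forall j', Q j' -> (g j <= g j')%N.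
Proof.
case=> j Qj; apply: NNPP => nomin.
elim/(well_founded_ind (Wf_nat.well_founded_ltof _ g)): j Qj => j IH Qj.
apply: nomin; exists j; split=> // j' Qj'; rewrite leqNgt; apply/negP => /ssrnat.ltP lt.
exact: IH lt Qj'.
Qed.

Lemma nondecreasing_subseq (g : nat -> nat) : exists phi : nat -> nat,
  (forall k, phi k < phi k.+1)%N /\ (forall k, g (phi k) <= g (phi k.+1))%N.
Proof.
have [next Hnext] : exists next : nat -> nat, forall a,
    (a < next a)%N /\ forall j, (a < j)%N -> (g (next a) <= g j)%N.
  apply: (choice (fun a j => (a < j)%N /\ forall j', (a < j')%N -> (g j <= g j')%N)).
  by move=> a; apply: nat_argmin; exists a.+1.
exists (fun k => iter k.+1 next 0%N); split=> k; first exact: (Hnext _).1.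
set a := iter k next 0%N; apply: (Hnext a).2.
exact: ltn_trans (Hnext a).1 (Hnext (next a)).1.
Qed.

Lemma dickson_subseq n (f : nat -> 'X_{1..n}) (s : seq 'I_n) : exists phi : nat -> nat,
  (forall k, phi k < phi k.+1)%N /\
  (forall k c, c \in s -> f (phi k) c <= f (phi k.+1) c)%N.
Proof.
elim: s => [|c s [phi [phi_incr f_phi]]]; first by exists id.
have [psi [psi_incr g_psi]] := nondecreasing_subseq (fun k => f (phi k) c).
exists (fun k => phi (psi k)); split=> k; first exact: (homo_ltn ltn_trans phi_incr (psi_incr k)).
move=> d; rewrite inE => /predU1P [-> //|ds].
apply: (homo_leq (f := fun k => f (phi k) d) leqnn leq_trans) => [{}k|].
  exact: f_phi.
exact: ltnW.
Qed.

Lemma dickson n (f : nat -> 'X_{1..n}) : exists i j, (i < j)%N /\ (f i <= f j)%MM.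
Proof.
have [phi [phi_incr f_phi]] := dickson_subseq f (enum 'I_n).
exists (phi 0%N), (phi 1%N); split=> //.
by apply/mnm_lepP => c; apply: f_phi; rewrite mem_enum.
Qed.

Section MonomialOrder.
Variables (n : nat) (le : rel 'X_{1..n}).
Hypothesis mo : monomial_order le.

Lemma mo_ge0 E : le 0%MM E.
Proof.
have [[le_refl le_trans _ _] [le_addl le_U]] := mo.
have le0D a b : le 0%MM a -> le 0%MM b -> le 0%MM (a + b)%MM.
  move=> le0a le0b; apply: le_trans le0b _.
  by have := le_addl _ _ b le0a; rewrite addm0 addmC.
rewrite [E]multinomUE_id; apply: (big_ind (le 0%MM)) => // c _.
elim: (E c) => [|k IH]; first by rewrite mulm0n.
by rewrite mulmS; apply: le0D => //; case: (le_U c).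
Qed.

Lemma le_of_lem E F : (E <= F)%MM -> le E F.
Proof.
move=> EF; rewrite -(submK EF) addmC.
by have := (proj1 (proj2 mo)) _ _ E (mo_ge0 (F - E)); rewrite addm0.
Qed.

Lemma mo_wf : well_founded (fun G F => (G != F) && le G F).
Proof.
have [[le_refl le_trans le_anti _] _] := mo.
move=> F0; apply: NNPP => F0_nacc.
pose NA := {F | ~ Acc (fun G F => (G != F) && le G F) F}.
have [down Hdown] : exists down : NA -> NA,
    forall F, sval (down F) != sval F /\ le (sval (down F)) (sval F).
  apply: (choice (fun F G : NA => sval G != sval F /\ le (sval G) (sval F))).
  case=> F F_nacc; apply: NNPP => nodown; apply: (F_nacc); constructor => G /andP[GF leGF].
  by apply: NNPP => G_nacc; apply: nodown; exists (exist _ G G_nacc).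
pose sq k := sval (iter k down (exist _ F0 F0_nacc)).
have sq_decr i j : (i <= j)%N -> le (sq j) (sq i).
  apply: (homo_leq (r := fun a b => le b a)) => [a|a b c lba lcb|k].
  - exact: le_refl.
  - exact: le_trans lcb lba.
  - exact: (Hdown _).2.
have [i [j [ij sq_ij]]] := dickson sq.
have [sq_neq sq_le] := Hdown (iter i down (exist _ F0 F0_nacc)).
case/negP: sq_neq; apply/eqP/le_anti; rewrite sq_le /=.
exact: le_trans (le_of_lem sq_ij) (sq_decr _ _ ij).
Qed.

End MonomialOrder.

Section Ideal.
Variables (R : comNzRingType) (J : R -> Prop).
Hypothesis hJ : is_ideal J.

Lemma ideal0 : J 0. Proof. by case: hJ. Qed.
Lemma idealD x y : J x -> J y -> J (x + y). Proof. by case: hJ => _ + _; apply. Qed.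
Lemma idealM r x : J x -> J (r * x). Proof. by case: hJ => _ _; apply. Qed.
Lemma idealMr r x : J x -> J (x * r). Proof. by rewrite mulrC; apply: idealM. Qed.

Lemma ideal_sum (T : Type) (r : seq T) (P : pred T) (F : T -> R) :
  (forall i, P i -> J (F i)) -> J (\sum_(i <- r | P i) F i).
Proof. by move=> JF; apply: big_ind => //; [exact: ideal0 | exact: idealD]. Qed.

Lemma ideal_det_mul k (M : 'M[R]_k) (v : 'I_k -> R) :
  (forall j, J (\sum_l M j l * v l)) -> forall l, J (\det M * v l).
Proof.
move=> JMv l; have -> : \det M * v l = ((\det M)%:M *m \col_l v l) l ord0.
  by rewrite mul_scalar_mx !mxE.
rewrite -mul_adj_mx -mulmxA mxE; apply: ideal_sum => j _; apply: idealM.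
by rewrite mxE; under eq_bigr do rewrite mxE.
Qed.

Lemma char_poly_ideal_mul k (B : 'M[R]_k) (t : R) (v : 'I_k -> R) :
  (forall j, J (t * v j - \sum_l B j l * v l)) -> forall l, J ((char_poly B).[t] * v l).
Proof.
move=> JBv; rewrite /char_poly -horner_evalE -det_map_mx; apply: ideal_det_mul => j.
suff -> : \sum_l map_mx (horner_eval t) (char_poly_mx B) j l * v l = t * v j - \sum_l B j l * v l.
  exact: JBv.
under eq_bigr do rewrite !mxE horner_evalE !hornerE mulrBl.
rewrite sumrB (bigD1 j) //= eqxx mulr1n hornerX big1 ?addr0 // => l /negbTE.
by rewrite eq_sym => ->; rewrite mulr0n horner0 mul0r.
Qed.

End Ideal.

Lemma idealZ (A : comNzRingType) n (J : {mpoly A[n]} -> Prop) (c : A) x :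
  is_ideal J -> J x -> J (c *: x).
Proof. by rewrite -mul_mpolyC => hJ; apply: idealM. Qed.

Section PrimeIdeal.
Variables (A : comNzRingType) (p : A -> Prop).
Hypothesis hp : is_prime_ideal p.

Lemma prime1 : ~ p 1. Proof. by case: hp. Qed.

Lemma primeM a b : ~ p a -> ~ p b -> ~ p (a * b).
Proof. by case: hp => _ _ pM pa pb /pM []. Qed.

Lemma prime_prod (T : Type) (r : seq T) (P : pred T) (F : T -> A) :
  (forall i, ~ p (F i)) -> ~ p (\prod_(i <- r | P i) F i).
Proof.
by move=> pF; apply: (big_ind (fun x => ~ p x)) => //; [exact: prime1 | exact: primeM].
Qed.

Lemma primeX a k : ~ p a -> ~ p (a ^+ k).
Proof.
by move=> pa; elim: k => [|k IH]; rewrite ?expr0 ?exprS; [exact: prime1 | exact: primeM].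
Qed.

Lemma prime_neq0 a : ~ p a -> a != 0.
Proof. by move=> pa; apply: contra_notN pa => /eqP ->; apply: ideal0; case: hp. Qed.

End PrimeIdeal.

Section Fractions.
Variables (A : comNzRingType) (V : lmodType A).

Lemma fr_sumE k (F : 'I_k -> V * A) :
  \big[@fr_add A V/fr_zero V]_(i < k) F i =
  (\sum_i (\prod_(j | j != i) (F j).2) *: (F i).1, \prod_i (F i).2).
Proof.
elim: k F => [|k IH] F; first by rewrite !big_ord0.
rewrite big_ord_recl IH /fr_add /=; congr (_, _); last by rewrite big_ord_recl.
rewrite [RHS]big_ord_recl scaler_sumr; congr (_ *: _ + _).
  by rewrite [RHS]big_mkcond big_ord_recl /= mul1r.
apply: eq_bigr => i _; rewrite scalerA; congr (_ *: _).
rewrite [RHS]big_mkcond big_ord_recl /= big_mkcond.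
by congr (_ * _); apply: eq_bigr => j _; rewrite (inj_eq lift_inj).
Qed.

End Fractions.

Lemma ext_loc_unitP (A : comNzRingType) (p : A -> Prop) (J : A -> Prop) :
  is_prime_ideal p -> ext_loc_unit p J <-> exists2 a, J a & ~ p a.
Proof.
move=> hp; have [p_ideal _ _] := hp; split; last first.
  case=> a Ja pa; exists 1%N, (fun=> (1, a)), (fun=> a); do 2!split=> //.
  exists 1; split; first exact: (prime1 hp).
  rewrite big_ord_recl big_ord0 /fr_add /fr_scale /fr_zero /= /GRing.scale /=.
  by rewrite !(mulr1, mul1r, mulr0, addr0) subrr.
case=> k [c [j [pc [Jj [u [pu]]]]]]; rewrite fr_sumE /= => /eqP.
rewrite !mulr1 subr_eq0 => /eqP eq_num; apply: NNPP => noJ.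
have pj i : p (j i) by apply: NNPP => pji; apply: noJ; exists (j i).
have: p (u * \prod_i ((c i).2 * 1) * 1).
  rewrite [X in p X]eq_num; apply: (idealM p_ideal); apply: (ideal_sum p_ideal) => i _.
  by apply: (idealM p_ideal); apply: (idealM p_ideal).
by rewrite mulr1; apply: (primeM hp pu); apply: (prime_prod hp) => i; rewrite mulr1.
Qed.

Lemma mcoeffMX_cond (A : comNzRingType) n (q : {mpoly A[n]}) (m E : 'X_{1..n}) :
  (q * 'X_[m])@_E = if (m <= E)%MM then q@_(E - m)%MM else 0.
Proof.
case: ifP => mE; first by rewrite -{1}(submK mE) addmC mcoeffMX.
apply/eqP; rewrite mcoeff_eq0 (perm_mem (msuppMX q m)); apply/mapP => -[G _ EG].
by move: mE; rewrite EG lem_addr.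
Qed.

Lemma mcoeff_sum_injX (A : comNzRingType) n N (a : 'I_N -> A) (M : 'I_N -> 'X_{1..n}) m :
  injective M -> (\sum_(l < N) a l *: 'X_[M l] : {mpoly A[n]})@_(M m) = a m.
Proof.
move=> M_inj; rewrite raddf_sum (bigD1 m) //= mcoeffZ mcoeffX eqxx mulr1 big1 ?addr0 //.
by move=> l lm; rewrite mcoeffZ mcoeffX (inj_eq M_inj) (negbTE lm) mulr0.
Qed.

Lemma mem_msupp_sumX (A : comNzRingType) n N (a : 'I_N -> A) (M : 'I_N -> 'X_{1..n}) F :
  F \in msupp (\sum_(l < N) a l *: 'X_[M l] : {mpoly A[n]}) -> exists l, F = M l.
Proof.
move/msupp_sum_le; rewrite filter_predT => /flatten_mapP [l _ /msuppZ_le].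
by rewrite msuppX mem_seq1 => /eqP ->; exists l.
Qed.

Lemma mnm1Mn_inj n (i : 'I_n) : injective (fun k => U_(i) *+ k)%MM.
Proof.
by move=> a b /(congr1 (fun m : 'X_{1..n} => m i)); rewrite /= !mulmnE mnm1E eqxx !mul1n.
Qed.

Section InitialIdeal.
Variables (A : comNzRingType) (n : nat) (le : rel 'X_{1..n}).
Hypothesis mo : monomial_order le.
Variable I : {mpoly A[n]} -> Prop.
Hypothesis hI : is_ideal I.

Definition supported_below E (g : {mpoly A[n]}) := forall F, ~~ le F E -> g@_F = 0.

Lemma initial_ideal_coef E q : initial_ideal le I q ->
  exists2 g, I g & g@_E = q@_E /\ supported_below E g.
Proof.
have [_ [le_addl _]] := mo.
pose C a := exists2 g, I g & g@_E = a /\ supported_below E g.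
have C0 : C 0 by exists 0; [exact: ideal0 | split=> [|F _]; rewrite mcoeff0].
case=> k [r [t [t_init ->]]]; rewrite raddf_sum.
apply: (big_ind C) => // [a b [g Ig [ga gE]] [h Ih [hb hE]]|l _].
  exists (g + h); first exact: idealD.
  by split=> [|F FE]; rewrite mcoeffD ?ga ?hb // gE ?hE ?addr0.
have [f [If [_ [E' [[_ E'max] ->]]]]] := t_init l.
rewrite /= -scalerAr mcoeffZ mcoeffMX_cond; case: ifP => [E'E|_]; last by rewrite mulr0.
exists ((r l)@_(E - E') *: (f * 'X_[E - E'])).
  by apply: idealZ => //; apply: idealMr.
split=> [|F FE]; first by rewrite mcoeffZ mcoeffMX_cond lem_subr submBA // addmC addmK mulrC.
rewrite mcoeffZ mcoeffMX_cond; case: ifP => [EF|_]; last by rewrite mulr0.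
rewrite [f@__]memN_msupp_eq0 ?mulr0 //; apply: contra FE => fF.
by have := le_addl _ _ (E - E')%MM (E'max _ fF); rewrite addmC !submK.
Qed.

Lemma initial_ideal_lead f E : I f -> f@_E != 0 ->
  (forall F, F \in msupp f -> le F E) -> initial_ideal le I (f@_E *: 'X_[E]).
Proof.
move=> If fE0 fE; exists 1%N, (fun=> 1), (fun=> f@_E *: 'X_[E]).
split; last by rewrite big_ord1 mul1r.
move=> _; exists f; split=> //; split; first by apply: contraNneq fE0 => ->; rewrite mcoeff0.
by exists E; do 2!split=> //; rewrite mcoeff_msupp.
Qed.

Lemma initial_ideal_monic i (q : {poly A}) (e e0 : A) :
  q \is monic -> e0 * e ^+ (size q).-1 != 0 ->
  I (e0 *: (map_poly (@mpolyC n A) q).[e *: 'X_i]) ->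
  initial_ideal le I ((e0 * e ^+ (size q).-1) *: 'X_[U_(i) *+ size q]).
Proof.
move=> q_monic nz Iq; have q_gt0 : (0 < size q)%N by rewrite size_poly_gt0 monic_neq0.
pose a (m : 'I_(size q)) := e0 * q`_m * e ^+ m.
pose M (m : 'I_(size q)) := (U_(i) *+ m.+1)%MM.
have M_inj : injective M by move=> l m /mnm1Mn_inj [] /val_inj.
(* G is x_i e0 q(e x_i); the factor x_i keeps every exponent of x_i positive. *)
set G := \sum_m a m *: 'X_[M m].
have IG : I G.
  have szq : size (map_poly (@mpolyC n A) q) = size q.
    by rewrite size_map_poly_id0 // (monicP q_monic) mpolyC_eq0 oner_neq0.
  move: (idealM hI 'X_i Iq); rewrite (horner_coef_wide _ (eq_leq szq)) scaler_sumr mulr_sumr.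
  congr I; apply: eq_bigr => m _.
  rewrite coef_map /= exprZn mpolyXn mul_mpolyC scalerA -scalerAr -scalerAr scalerA.
  by rewrite -mpolyXD -mulmS.
have top_lt : ((size q).-1 < size q)%N by rewrite ltn_predL.
pose top := Ordinal top_lt.
have a_top : a top = e0 * e ^+ (size q).-1.
  by rewrite /a /= -lead_coefE (monicP q_monic) mulr1.
have M_top : M top = (U_(i) *+ size q)%MM by rewrite /M /= prednK.
have := initial_ideal_lead (E := M top) IG.
rewrite /G mcoeff_sum_injX // a_top M_top; apply=> // F.
case/mem_msupp_sumX => l ->; apply: (le_of_lem mo); apply/mnm_lepP => c.
by rewrite !mulmnE leq_mul.
Qed.

End InitialIdeal.

Section Localization.
Variables (A : comNzRingType) (n : nat) (le : rel 'X_{1..n}).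
Hypothesis mo : monomial_order le.
Variables (I : {mpoly A[n]} -> Prop) (p : A -> Prop).
Hypotheses (hI : is_ideal I) (hp : is_prime_ideal p).

(* In M_p, v/1 = w/u with w of total degree < d ([msize] is the degree plus one). *)
Definition loc_reduces d (v : {mpoly A[n]}) :=
  exists2 u, ~ p u & exists2 w, (msize w <= d)%N & I (u *: v - w).

Lemma loc_reduces_small d v : (msize v <= d)%N -> loc_reduces d v.
Proof.
by move=> vd; exists 1; [exact: prime1 | exists v; rewrite // scale1r subrr; exact: ideal0].
Qed.

Lemma loc_reducesD d v1 v2 :
  loc_reduces d v1 -> loc_reduces d v2 -> loc_reduces d (v1 + v2).
Proof.
move=> [u1 pu1 [w1 w1d Iw1]] [u2 pu2 [w2 w2d Iw2]].
exists (u1 * u2); first exact: primeM.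
exists (u2 *: w1 + u1 *: w2).
  by rewrite (leq_trans (msizeD_le _ _)) // geq_max !(leq_trans (msizeZ_le _ _)).
have -> : (u1 * u2) *: (v1 + v2) - (u2 *: w1 + u1 *: w2) =
    u2 *: (u1 *: v1 - w1) + u1 *: (u2 *: v2 - w2).
  by rewrite !scalerBr !scalerA !scalerDr [u2 * u1]mulrC addrACA opprD.
by apply: idealD => //; apply: idealZ.
Qed.

Lemma loc_reducesZ d c v : loc_reduces d v -> loc_reduces d (c *: v).
Proof.
move=> [u pu [w wd Iw]]; exists u => //; exists (c *: w).
  exact: leq_trans (msizeZ_le _ _) wd.
by rewrite scalerA mulrC -scalerA -scalerBr; apply: idealZ.
Qed.

Lemma loc_reduces_sum d (T : Type) (r : seq T) (F : T -> {mpoly A[n]}) :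
  (forall i, loc_reduces d (F i)) -> loc_reduces d (\sum_(i <- r) F i).
Proof.
move=> redF; apply: (big_ind (loc_reduces d)) => //; last exact: loc_reducesD.
by apply: loc_reduces_small; rewrite msize0.
Qed.

Lemma loc_reduces_congr d v v' : I (v' - v) -> loc_reduces d v -> loc_reduces d v'.
Proof.
move=> Iv [u pu [w wd Iw]]; exists u => //; exists w => //.
by rewrite -[v'](subrK v) scalerDr -addrA; apply: idealD => //; apply: idealZ.
Qed.

Lemma loc_reduces_unscale d c v : ~ p c -> loc_reduces d (c *: v) -> loc_reduces d v.
Proof.
move=> pc [u pu [w wd Iw]]; exists (u * c); first exact: primeM.
by exists w; rewrite // -scalerA.
Qed.

Lemma loc_reducesX_step d F K g :
  (K <= F)%MM -> I g -> ~ p g@_K -> supported_below le K g ->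
  (forall G, (G != F) && le G F -> loc_reduces d 'X_[G]) -> loc_reduces d 'X_[F].
Proof.
have [_ [le_addl _]] := mo.
move=> KF Ig pgK g_below IH; set h := g - g@_K *: 'X_[K].
set F' := (F - K)%MM; have eqF : F = (F' + K)%MM by rewrite submK.
have h_below G : G \in msupp h -> (G != K) && le G K.
  rewrite mcoeff_msupp /h mcoeffB mcoeffZ mcoeffX.
  have [->|GK] := eqVneq G K; first by rewrite mulr1 subrr eqxx.
  rewrite mulr0 subr0 => gG; apply: contraNT gG => /= leGK.
  by rewrite g_below.
have red_h : loc_reduces d ('X_[F'] * h).
  rewrite [h]mpolyE mulr_sumr; apply: loc_reduces_sum => G.
  case: (boolP (G \in msupp h)) => [/h_below /andP[GK leGK]|hG].
    rewrite -scalerAr -mpolyXD; apply: loc_reducesZ; apply: IH.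
    by rewrite eqF eqm_add2l GK le_addl.
  by rewrite (memN_msupp_eq0 hG) scale0r mulr0; apply: loc_reduces_small; rewrite msize0.
apply: (loc_reduces_unscale (c := g@_K)) => //.
apply: (loc_reduces_congr (v := - ('X_[F'] * h))); last first.
  by rewrite -scaleN1r; apply: loc_reducesZ.
rewrite opprK /h mulrBr -scalerAr -mpolyXD -eqF addrC subrK.
exact: idealM.
Qed.

Lemma loc_reduces_all (k : 'I_n -> nat) (g : 'I_n -> {mpoly A[n]}) :
  (forall j, [/\ I (g j), ~ p (g j)@_(U_(j) *+ k j)
               & supported_below le (U_(j) *+ k j) (g j)]) ->
  forall v, loc_reduces (\sum_j k j).+1 v.
Proof.
move=> Hg v; rewrite [v]mpolyE; apply: loc_reduces_sum => m; apply: loc_reducesZ.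
elim/(well_founded_ind (mo_wf mo)): m => F IH.
have [Fsmall|Fbig] := ltnP (mdeg F) (\sum_j k j).+1.
  by apply: loc_reduces_small; rewrite msizeX.
have [j kF] : exists j, (k j <= F j)%N.
  apply: NNPP => none; move: Fbig; apply/negP; rewrite -ltnNge ltnS mdegE.
  by apply: leq_sum => j _; rewrite leqNgt; apply/negP => kF; apply: none; exists j; exact: ltnW.
have [Ig pg g_below] := Hg j.
apply: (loc_reducesX_step (g := g j)) Ig pg g_below IH.
apply/mnm_lepP => i; rewrite mulmnE mnm1E; case: eqP => [<-|_]; first by rewrite mul1n.
by rewrite mul0n.
Qed.

Lemma loc_fin_gen_of_reduces d : (forall v, loc_reduces d.+1 v) -> loc_fin_gen p I.
Proof.
move=> red; set K := #|{: 'X_{1..n < d.+1}}|.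
have K_gt0 : (0 < K)%N by apply/card_gt0P; exists (@bm0 n d).
exists K, (fun l => ('X_[(enum_val l : 'X_{1..n < d.+1})], 1)); split=> [l|[v s] /= ps].
  exact: prime1.
have [u pu [w wd Iw]] := red v.
exists (fun l => (w@_(enum_val l : 'X_{1..n < d.+1}), u * s)); split=> [l|].
  exact: primeM.
exists 1; split; first exact: prime1.
have powK : forall l : 'I_K, \prod_(j | j != l) (u * s * 1) = (u * s) ^+ K.-1.
  by move=> l; rewrite mulr1 -[X in _ ^+ X.-1](card_ord K) -(cardC1 l) -prodr_const.
have sum_w : \sum_(l < K) \prod_(j | j != l) (u * s * 1) *:
    (w@_(enum_val l : 'X_{1..n < d.+1}) *: 'X_[(enum_val l : 'X_{1..n < d.+1})]) =
    (u * s) ^+ K.-1 *: w.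
  under eq_bigr => l _ do rewrite powK.
  rewrite -scaler_sumr [in RHS](mpolywE wd) /K.
  by rewrite -(big_enum_val (fun m : 'X_{1..n < d.+1} => w@_m *: 'X_[m])).
rewrite (fr_sumE (V := {mpoly A[n]})) /fr_scale /= sum_w mulr1 prodr_const card_ord !mul1r scalerA.
rewrite -[X in _ ^+ X *: v](prednK K_gt0) exprSr [u * s]mulrC mulrA -scalerA [s * _]mulrC.
by rewrite -scalerBr; apply: idealZ.
Qed.

Lemma loc_fin_gen_of_initial :
  (forall i, ext_loc_unit p (initial_coef_ideal_inf le I i)) -> loc_fin_gen p I.
Proof.
move=> unit_init.
have /choice [kg Hkg] : forall j, exists kg : nat * {mpoly A[n]},
    [/\ I kg.2, ~ p kg.2@_(U_(j) *+ kg.1) & supported_below le (U_(j) *+ kg.1) kg.2].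
  move=> j; have [a [k in_a] pa] := (ext_loc_unitP _ hp).1 (unit_init j).
  have [g Ig [gE g_below]] := initial_ideal_coef mo hI (U_(j) *+ k.+1) in_a.
  by exists (k.+1, g); split; rewrite //= gE mcoeffZ mcoeffX eqxx mulr1.
exact: loc_fin_gen_of_reduces (loc_reduces_all Hkg).
Qed.

Lemma loc_fin_gen_rel : loc_fin_gen p I -> exists k (v : 'I_k -> {mpoly A[n]}),
  forall w, exists2 e, ~ p e & exists b : 'I_k -> A, I (e *: w - \sum_l b l *: v l).
Proof.
case=> k [gen [p_gen span]]; exists k, (fun l => (gen l).1) => w.
have [c [pc [u [pu]]]] := span (w, 1) (prime1 hp).
rewrite (fr_sumE (V := {mpoly A[n]})) /fr_scale /= mulr1 scaler_sumr => Irel.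
exists (u * \prod_l ((c l).2 * (gen l).2)).
  by apply: (primeM hp pu); apply: (prime_prod hp) => l; apply: (primeM hp).
exists (fun l => u * \prod_(j | j != l) ((c j).2 * (gen j).2) * (c l).1).
by move: Irel; congr (I (_ - _)); apply: eq_bigr => l _; rewrite !scalerA.
Qed.

Lemma rel_common_denominator k m (v : 'I_k -> {mpoly A[n]}) (w : 'I_m -> {mpoly A[n]}) :
  (forall j, exists2 e, ~ p e & exists b : 'I_k -> A, I (e *: w j - \sum_l b l *: v l)) ->
  exists2 e, ~ p e & exists B : 'M[A]_(m, k), forall j, I (e *: w j - \sum_l B j l *: v l).
Proof.
move=> rel; have /choice [eb Ieb] : forall j, exists eb : A * ('I_k -> A),
    ~ p eb.1 /\ I (eb.1 *: w j - \sum_l eb.2 l *: v l).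
  by move=> j; have [e pe [b Ib]] := rel j; exists (e, b).
exists (\prod_j (eb j).1); first by apply: (prime_prod hp) => j; case: (Ieb j).
exists (\matrix_(j, l) (\prod_(j' | j' != j) (eb j').1 * (eb j).2 l)) => j.
rewrite (bigD1 j) //= mulrC -scalerA.
rewrite [X in _ - X](eq_bigr (fun l => \prod_(j' | j' != j) (eb j').1 *: ((eb j).2 l *: v l))).
  by rewrite -scaler_sumr -scalerBr; apply: idealZ => //; case: (Ieb j).
by move=> l _; rewrite mxE scalerA.
Qed.

Lemma initial_of_loc_fin_gen i :
  loc_fin_gen p I -> ext_loc_unit p (initial_coef_ideal_inf le I i).
Proof.
case/loc_fin_gen_rel => k [v rel].
have [e pe [B relB]] := rel_common_denominator (fun j => rel ('X_i * v j)).
have [e0 pe0 [beta rel1]] := rel 1.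
set chi := (map_poly (@mpolyC n A) (char_poly B)).[e *: 'X_i].
have chi_v l : I (chi * v l).
  rewrite /chi map_char_poly; apply: (char_poly_ideal_mul hI) => j.
  rewrite -scalerAl; under eq_bigr do rewrite mxE mul_mpolyC.
  exact: relB.
have I_chi : I (e0 *: chi).
  have -> : e0 *: chi = chi * (e0 *: 1 - \sum_l beta l *: v l) + \sum_l beta l *: (chi * v l).
    rewrite mulrBr mulr_sumr -scalerAr mulr1 -addrA [X in _ + X]addrC.
    by under eq_bigr do rewrite scalerAr; rewrite subrr addr0.
  by apply: (idealD hI); [apply: (idealM hI) | apply: (ideal_sum hI) => l _; apply: idealZ].
have := initial_ideal_monic mo hI (char_poly_monic B) _ I_chi.
rewrite size_char_poly /= => in_init; apply/(ext_loc_unitP _ hp).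
have pe0e : ~ p (e0 * e ^+ k) by apply: (primeM hp pe0); apply: (primeX hp).
by exists (e0 * e ^+ k) => //; exists k; apply: in_init; apply: (prime_neq0 hp).
Qed.

End Localization.

Theorem proposition5p3 (A : comNzRingType) (n : nat) (le : rel 'X_{1..n})
    (I : {mpoly A[n]} -> Prop) (p : A -> Prop) :
  noetherian A -> monomial_order le -> is_ideal I -> is_prime_ideal p ->
  (loc_fin_gen p I <->
   (forall i : 'I_n, ext_loc_unit p (initial_coef_ideal_inf le I i))).
Proof.
move=> _ mo hI hp; split=> [fin i|]; first exact: initial_of_loc_fin_gen.
exact: loc_fin_gen_of_initial.
Qed.
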